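(* For any sign string and state string, the web produced by the growth algorithm is non-elliptic, i.e. it contains no closed loops and every internal face has at least six sides.
   Context: A sign string is $S=(s_1,\dots,s_n)\in\{+,-\}^n$ and a state string is $J=(j_1,\dots,j_n)\in\{-1,0,1\}^n$. The growth algorithm builds an oriented planar graph downward from $n$ parallel strands (the $k$-th strand oriented upward toward its top endpoint if $s_k=+$ and downward if $s_k=-$), keeping a current pair (sign string, state string) describing the strands hanging at the bottom. A replacement acts on two adjacent positions $k,k+1$ with current signs $(s,s')$ and states $(j,j')$: (a) If $s'\ne s$: if $(j,j')=(1,0)$, $(0,0)$ or $(0,-1)$, attach an ''H'' (two trivalent vertices joined by a horizontal edge, the left vertex joined to strand $k$ above and to a new strand below, the right vertex likewise for strand $k+1$); the new signs at positions $k,k+1$ are $(s',s)$ and the new states are respectively $(0,1)$, $(-1,1)$, $(-1,0)$. If $(j,j')=(1,-1)$, join the two strands by a cup and delete both positions. (b) If $s'=s$: if $(j,j')=(1,0)$, $(0,-1)$ or $(1,-1)$, attach a ''Y'' (the two strands meet at a trivalent vertex whose third edge continues downward as a single strand); the two positions are replaced by one position with sign opposite to $s$ and state respectively $1$, $-1$, $0$. The algorithm repeatedly applies some applicable replacement and stops when none applies. An internal face of the resulting graph is a bounded complementary region not touching the top line of endpoints or the strands left hanging at the bottom. *)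

From Stdlib Require List.
From mathcomp Require Import all_boot.

Set Implicit Arguments.
Unset Strict Implicit.
Unset Printing Implicit Defensive.

Inductive sgn : Type := Plus | Minus.

Definition opp_sgn (s : sgn) : sgn := match s with Plus => Minus | Minus => Plus end.

(** States j_k in {-1,0,1}. *)
Inductive st : Type := Jm | J0 | Jp .

(** A region (complementary component of the partially built web) that is
    currently open, or a face that has been closed off.
    [corners] = number of (trivalent-vertex) corners on its boundary so far,
    i.e. the number of sides once the face is closed;
    [top] = whether the region touches the top line of endpoints. *)
Record region : Type := Region { corners : nat; top : bool }.

Definition addc (r : region) (m : nat) : region := Region (corners r + m) (top r).
Definition merge (l r : region) : region :=
  Region (corners l + corners r) (top l || top r).

(** Current state of the growth algorithm:
    - [strands]: the (sign, state) pairs of the strands hanging at the bottom,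
      from left to right;
    - [regions]: the open regions between/around these strands, from left to
      right (one more than the number of strands);
    - [faces]: the faces that have been closed off so far. *)
Record config : Type := Config {
  strands : seq (prod sgn st);
  regions : seq region;
  faces : seq region }.

Definition H_rule (j j' : st) : option (st * st) :=
  match j, j' with
  | Jp, J0 => Some (J0, Jp)
  | J0, J0 => Some (Jm, Jp)
  | J0, Jm => Some (Jm, J0)
  | _, _ => None
  end.

Definition Y_rule (j j' : st) : option st :=
  match j, j' with
  | Jp, J0 => Some Jp
  | J0, Jm => Some Jm
  | Jp, Jm => Some J0
  | _, _ => None
  end.

(** One replacement acting at adjacent positions k, k+1 (k = size a).
    The regions to the left of strand k, between strands k and k+1, and to
    the right of strand k+1 are L, M, R.
    - H: left vertex has corners in L, M and the new region below the
      horizontal edge; right vertex in M, the new region and R.  M is closed.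
    - cup: M is closed (no new corner); L and R become one region.
    - Y: the vertex has corners in L, M, R; M is closed. *)
Inductive step : config -> config -> Prop :=
| step_H : forall a b ra rb s s' j j' t t' L M R F,
    size ra = size a -> s <> s' -> H_rule j j' = Some (t, t') ->
    step (Config (a ++ (s, j) :: (s', j') :: b) (ra ++ L :: M :: R :: rb) F)
         (Config (a ++ (s', t) :: (s, t') :: b)
                 (ra ++ addc L 1 :: Region 2 false :: addc R 1 :: rb)
                 (rcons F (addc M 2)))
| step_cup : forall a b ra rb s s' L M R F,
    size ra = size a -> s <> s' ->
    step (Config (a ++ (s, Jp) :: (s', Jm) :: b) (ra ++ L :: M :: R :: rb) F)
         (Config (a ++ b) (ra ++ merge L R :: rb) (rcons F M))
| step_Y : forall a b ra rb s j j' t L M R F,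
    size ra = size a -> Y_rule j j' = Some t ->
    step (Config (a ++ (s, j) :: (s, j') :: b) (ra ++ L :: M :: R :: rb) F)
         (Config (a ++ (opp_sgn s, t) :: b)
                 (ra ++ addc L 1 :: addc R 1 :: rb)
                 (rcons F (addc M 1))).

Inductive reach : config -> config -> Prop :=
| reach_refl : forall c, reach c c
| reach_step : forall c1 c2 c3, step c1 c2 -> reach c2 c3 -> reach c1 c3.

Definition terminal (c : config) : Prop := forall c', ~ step c c'.

Definition init (S : seq sgn) (J : seq st) : config :=
  Config (zip S J) (nseq (size S).+1 (Region 0 true)) [::].

(** Internal face: a closed-off (bounded) region not touching the top line
    (closed-off regions never touch the bottom strands). *)
Definition internal_face (c : config) (f : region) : Prop :=
  List.In f (faces c) /\ top f = false.

(** Non-elliptic: every internal face has at least six sides.  (Closed loops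
    cannot even be represented.) *)
Definition non_elliptic (c : config) : Prop :=
  forall f, internal_face c f -> 6 <= corners f.

From Pilot Require Import Defs.
From mathcomp Require Import all_boot.
From mathcomp Require Import zify.

Set Implicit Arguments.
Unset Strict Implicit.
Unset Printing Implicit Defensive.

(** The growth algorithm preserves a local invariant of the open regions.  A
    region not touching the top line lies between two hanging strands [x] and
    [y]; it already has at least [5 - lcredit x - rcredit y] corners, where
    the credits measure how far the states of [x] and [y] are from those that
    allow the region to be closed, and its number of corners has the parity
    forced by the alternation of sources and sinks along its boundary.  Each
    replacement preserves these bounds, and the rule tables are such that a
    region can only be closed off once it has at least six corners. *)

Definition lcredit (j : st) : nat := match j with Jp => 0 | J0 => 1 | Jm => 2 end.
Definition rcredit (j : st) : nat := match j with Jm => 0 | J0 => 1 | Jp => 2 end.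
Definition sbit (s : sgn) : nat := if s is Plus then 1 else 0.

Definition inner_region_ok (x y : sgn * st) (r : region) : bool :=
  (5 <= corners r + lcredit x.2 + rcredit y.2)
  && odd (corners r + sbit x.1 + sbit y.1).

(* [None] stands for the missing neighbour of an outermost region. *)
Definition region_ok (po qo : option (sgn * st)) (r : region) : bool :=
  top r || if (po, qo) is (Some x, Some y) then inner_region_ok x y r else false.

Fixpoint regions_ok (po : option (sgn * st)) (ss : seq (sgn * st))
    (rs : seq region) : bool :=
  match ss, rs with
  | y :: ss', r :: rs' => region_ok po (Some y) r && regions_ok (Some y) ss' rs'
  | [::], [:: r] => region_ok po None r
  | _, _ => false
  end.

Definition faces_ok (F : seq region) : Prop :=
  forall f, List.In f F -> top f = false -> 6 <= corners f.

Definition growth_inv (c : config) : Prop :=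
  regions_ok None (strands c) (regions c) /\ faces_ok (faces c).

Lemma sbit_neq s s' : s <> s' -> sbit s + sbit s' = 1.
Proof. by case: s; case: s'. Qed.

Lemma opp_sgn_neq s : s <> opp_sgn s.
Proof. by case: s. Qed.

Lemma H_rule_credit j j' t t' : H_rule j j' = Some (t, t') ->
  [/\ rcredit j <= (rcredit t).+1, lcredit j' <= (lcredit t').+1,
      lcredit j + rcredit j' <= 2 & 3 <= lcredit t + rcredit t'].
Proof. by case: j; case: j' => //= -[<- <-]. Qed.

Lemma Y_rule_credit j j' t : Y_rule j j' = Some t ->
  [/\ rcredit j <= (rcredit t).+1, lcredit j' <= (lcredit t).+1
    & lcredit j + rcredit j' <= 1].
Proof. by case: j; case: j' => //= -[<-]. Qed.

Lemma regions_ok_replace_suffix po a ra s rs s' rs' : size ra = size a ->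
  (forall p, regions_ok p s rs -> regions_ok p s' rs') ->
  regions_ok po (a ++ s) (ra ++ rs) -> regions_ok po (a ++ s') (ra ++ rs').
Proof.
move=> Hsz Hsuf; elim: a ra Hsz po => [|y a IH] [|r ra] //= [Hsz] po.
by case/andP=> -> /(IH _ Hsz) ->.
Qed.

Lemma regions_ok_suffix po a ra s rs : size ra = size a ->
  regions_ok po (a ++ s) (ra ++ rs) -> exists p, regions_ok p s rs.
Proof.
elim: a ra po => [|y a IH] [|r ra] //= po; first by exists po.
by case=> /IH {}IH /andP[_ /IH].
Qed.

Lemma regions_ok_replace_head p p' b R R' rb :
  (forall q, region_ok p q R -> region_ok p' q R') ->
  regions_ok p b (R :: rb) -> regions_ok p' b (R' :: rb).
Proof.
move=> HR; case: b => [|y b] /=; first by case: rb => //; apply: HR.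
by case/andP=> /HR -> ->.
Qed.

Lemma region_ok_growl p s s' j t L : s <> s' -> rcredit j <= (rcredit t).+1 ->
  region_ok p (Some (s, j)) L -> region_ok p (Some (s', t)) (addc L 1).
Proof.
case: L => c [] //= /sbit_neq Hs Ht; case: p => [[sp jp]|] //=.
by rewrite /inner_region_ok => /andP[/= h1 h2]; apply/andP; split => /=; lia.
Qed.

Lemma region_ok_growr q s s' j t R : s <> s' -> lcredit j <= (lcredit t).+1 ->
  region_ok (Some (s, j)) q R -> region_ok (Some (s', t)) q (addc R 1).
Proof.
case: R => c [] //= /sbit_neq Hs Ht; case: q => [[sq jq]|] //=.
by rewrite /inner_region_ok => /andP[/= h1 h2]; apply/andP; split => /=; lia.
Qed.

Lemma region_ok_merge p q s s' L R : s <> s' ->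
  region_ok p (Some (s, Jp)) L -> region_ok (Some (s', Jm)) q R ->
  region_ok p q (Defs.merge L R).
Proof.
case: L R => cL [] [cR []] //= /sbit_neq Hs; rewrite ?orbT //.
case: p q => [[sp jp]|] [[sq jq]|] //=; rewrite /inner_region_ok.
by move=> /andP[/= h1 h2] /andP[/= h3 h4]; apply/andP; split => /=; lia.
Qed.

(* [m] is the number of corners added when the region is closed off: 2 for an
   H, 0 for a cup and 1 for a Y. *)
Lemma region_ok_face x y M m :
  region_ok (Some x) (Some y) M -> top M = false ->
  lcredit x.2 + rcredit y.2 <= m -> odd (sbit x.1 + sbit y.1 + m) ->
  6 <= corners M + m.
Proof. by rewrite /region_ok => + HMtop; rewrite HMtop => /andP[/=]; lia. Qed.

Lemma faces_ok_rcons F f : faces_ok F -> (top f = false -> 6 <= corners f) ->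
  faces_ok (rcons F f).
Proof.
by move=> HF Hf g; rewrite -cats1 => /List.in_app_iff [/HF // | [<- // | []]].
Qed.

Lemma step_growth_inv c c' : step c c' -> growth_inv c -> growth_inv c'.
Proof.
case=> {c c'} [a b ra rb s s' j j' t t' L M R F Hsz Hs
  /H_rule_credit [cl cr cM cN]
  | a b ra rb s s' L M R F Hsz Hs
  | a b ra rb s j j' t L M R F Hsz /Y_rule_credit [cl cr cM]] [/= Hr HF].
- have Hsb := sbit_neq Hs.
  have [_ /and3P[_ okM _]] := regions_ok_suffix Hsz Hr.
  have okN : region_ok (Some (s', t)) (Some (s, t')) (Region 2 false).
    by rewrite /region_ok /inner_region_ok /=; lia.
  split; last first.
    apply: faces_ok_rcons HF _ => /= HMtop.
    by apply: region_ok_face okM HMtop cM _ => /=; lia.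
  apply: regions_ok_replace_suffix Hsz _ Hr => q /and3P[okL _ okR].
  rewrite /= (region_ok_growl Hs cl okL) okN /=.
  by apply: regions_ok_replace_head okR => q'; apply: region_ok_growr (nesym Hs) cr.
- have Hsb := sbit_neq Hs.
  have [_ /and3P[_ okM _]] := regions_ok_suffix Hsz Hr.
  split; last first.
    apply: faces_ok_rcons HF _ => HMtop; rewrite -[corners M]addn0.
    by apply: region_ok_face okM HMtop _ _ => /=; lia.
  apply: regions_ok_replace_suffix Hsz _ Hr => q /and3P[okL _ okR].
  by apply: regions_ok_replace_head okR => q'; apply: region_ok_merge Hs okL.
- have Hs := @opp_sgn_neq s.
  have [_ /and3P[_ okM _]] := regions_ok_suffix Hsz Hr.
  split; last first.
    apply: faces_ok_rcons HF _ => /= HMtop.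
    by apply: region_ok_face okM HMtop cM _ => /=; lia.
  apply: regions_ok_replace_suffix Hsz _ Hr => q /and3P[okL _ okR].
  rewrite /= (region_ok_growl Hs cl okL) /=.
  by apply: regions_ok_replace_head okR => q'; apply: region_ok_growr Hs cr.
Qed.

Lemma reach_growth_inv c c' : reach c c' -> growth_inv c -> growth_inv c'.
Proof. by elim=> // c1 c2 c3 /step_growth_inv Hstep _ IH /Hstep. Qed.

Lemma regions_ok_nseq_top po ss :
  regions_ok po ss (nseq (size ss).+1 (Region 0 true)).
Proof. by elim: ss po => [|y ss IH] po //=; rewrite IH. Qed.

Lemma growth_inv_init S J : size S = size J -> growth_inv (init S J).
Proof.
move=> HSJ; split=> [|f []] /=.
have -> : size S = size (zip S J) by rewrite size_zip HSJ minnn.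
exact: regions_ok_nseq_top.
Qed.

Theorem lemma3 (S : seq sgn) (J : seq st) (c : config) :
  size S = size J -> reach (init S J) c -> terminal c -> non_elliptic c.
Proof.
move=> HSJ Hreach _ f [Hf Hftop].
have [_ HF] := reach_growth_inv Hreach (growth_inv_init HSJ).
exact: HF.
Qed.
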